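(* Let $k\ge2$, $n\ge1$ be integers, let $\bar{\mathcal{P}}\in\mathbb{R}^{[k,n]}$ be a columnwise-substochastic tensor, $\mathbf{v}\in\mathbb{R}^n$ a stochastic vector and $\alpha\in[0,1)$. Define $\mathcal{P}\in\mathbb{R}^{[k,n]}$ by $p_{ii_2\dots i_k}:=\bar p_{ii_2\dots i_k}+v_i\left(1-\sum_{\ell=1}^n\bar p_{\ell i_2\dots i_k}\right)$. Then the MPR problem $$\mathbf{x}=\alpha\mathcal{P}\mathbf{x}^{k-1}+(1-\alpha)\mathbf{v},\quad\mathbf{x}\in\mathbb{R}^n_+,\quad\mathbf{e}^T\mathbf{x}=1$$ has a unique solution if and only if the MLPPR system $(\mathbf{e}^T\mathbf{y})^{k-2}\mathbf{y}-\alpha\bar{\mathcal{P}}\mathbf{y}^{k-1}=\mathbf{v}$ has a unique nonnegative solution $\mathbf{y}\in\mathbb{R}^n_+$.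
   Context: For $\mathcal{P}\in\mathbb{R}^{[k,n]}$ (real tensors of order $k$, dimension $n$) and $\mathbf{y}\in\mathbb{R}^n$, $(\mathcal{P}\mathbf{y}^{k-1})_i=\sum_{i_2,\dots,i_k}p_{i i_2\dots i_k}y_{i_2}\cdots y_{i_k}$. $\bar{\mathcal{P}}$ is columnwise-substochastic if its entries are nonnegative and $\sum_{i}\bar p_{i i_2\dots i_k}\le1$ for all $i_2,\dots,i_k$. $\mathbf{e}$ is the all-ones vector; a stochastic vector is nonnegative with entries summing to $1$. *)

From HB Require Import structures.
From mathcomp Require Import all_boot all_order all_algebra.
From mathcomp Require Import reals.
Set Implicit Arguments. Unset Strict Implicit. Unset Printing Implicit Defensive.
Import Order.TTheory GRing.Theory Num.Theory.
Local Open Scope ring_scope.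

(* A tensor of order k and dimension n: entry p_{i i_2 ... i_k} is
   [P i j] where [j : midx k n] encodes the trailing k-1 indices
   (i_2,...,i_k) as a function 'I_(k-1) -> 'I_n. *)
Definition midx (k n : nat) := {ffun 'I_k.-1 -> 'I_n}.
Definition tensor (R : Type) (k n : nat) := 'I_n -> midx k n -> R.

Definition tapply (R : realType) (k n : nat) (P : tensor R k n)
  (y : {ffun 'I_n -> R}) (i : 'I_n) : R :=
  \sum_(j : midx k n) P i j * \prod_(m < k.-1) y (j m).

Definition col_substochastic (R : realType) (k n : nat) (Pb : tensor R k n) :=
  (forall i j, 0 <= Pb i j) /\ (forall j, \sum_(i < n) Pb i j <= 1).

Definition stochastic (R : realType) (n : nat) (v : {ffun 'I_n -> R}) :=
  (forall i, 0 <= v i) /\ \sum_(i < n) v i = 1.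

Definition PR_tensor (R : realType) (k n : nat) (Pb : tensor R k n)
  (v : {ffun 'I_n -> R}) : tensor R k n :=
  fun i j => Pb i j + v i * (1 - \sum_(l < n) Pb l j).

Definition MPR_solution (R : realType) (k n : nat) (alpha : R) (P : tensor R k n)
  (v x : {ffun 'I_n -> R}) : Prop :=
  (forall i, x i = alpha * tapply P x i + (1 - alpha) * v i) /\
  (forall i, 0 <= x i) /\ \sum_(i < n) x i = 1.

Definition MLPPR_solution (R : realType) (k n : nat) (alpha : R) (Pb : tensor R k n)
  (v y : {ffun 'I_n -> R}) : Prop :=
  (forall i, (\sum_(l < n) y l) ^+ (k - 2) * y i - alpha * tapply Pb y i = v i) /\
  (forall i, 0 <= y i).

From HB Require Import structures.
From mathcomp Require Import all_boot all_order all_algebra.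
From mathcomp Require Import reals.
From mathcomp Require Import ring.
Set Implicit Arguments. Unset Strict Implicit. Unset Printing Implicit Defensive.
Import Order.TTheory GRing.Theory Num.Theory.
Local Open Scope ring_scope.

(* Each column
   of [PR_tensor Pb v] is the column of [Pb] completed by a multiple of v, so on
   the simplex the MPR equation reads x = alpha Pb x^(k-1) + (1 - alpha T x) v,
   where 1 - alpha T x > 0 because T x <= 1.  Comparing with the MLPPR system,
   a nonnegative y solves it iff y = c x with x := y / e^T y solving MPR and
   c > 0 the root of c^(k-1) (1 - alpha T x) = 1.  So normalization is a
   bijection between the two solution sets, and uniqueness transfers. *)

Lemma unique_ex_transfer (T U : Type) (A : T -> Prop) (B : U -> Prop) (g : U -> T) :
  (forall y, B y -> A (g y)) ->
  (forall x, A x -> exists2 y, B y & g y = x) ->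
  (forall y1 y2, B y1 -> B y2 -> g y1 = g y2 -> y1 = y2) ->
  (exists! x, A x) <-> (exists! y, B y).
Proof.
move=> gB gA g_inj; split.
- move=> [x [Ax x_uniq]]; have [y By gy] := gA x Ax.
  exists y; split=> // y' By'; apply: g_inj => //.
  by rewrite gy; apply: x_uniq; apply: gB.
- move=> [y [By y_uniq]]; exists (g y); split; first exact: gB.
  by move=> x /gA [y' By' <-]; rewrite -(y_uniq y').
Qed.

Lemma exists_pos_root (R : rcfType) (d : nat) (a : R) : (0 < d)%N -> 0 < a ->
  exists2 r : R, 0 < r & r ^+ d = a.
Proof.
move=> d_gt0 a_gt0; set p : {poly R} := 'X^d - a%:P.
have p_sign : p.[0] <= 0 <= p.[1 + a].
  rewrite !hornerE expr0n eqn0Ngt d_gt0 sub0r oppr_le0 ltW //= subr_ge0.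
  rewrite (le_trans (ler_wpDl ler01 (lexx a))) //.
  by rewrite ler_eXnr // lerDl ltW.
have [r /andP[r_ge0 _] /rootP] := poly_ivt (addr_ge0 ler01 (ltW a_gt0)) p_sign.
move/eqP; rewrite !hornerE subr_eq0 => /eqP ra.
exists r => //; rewrite lt_neqAle r_ge0 andbT; apply: contraTneq a_gt0 => r0.
by rewrite -ra -r0 expr0n eqn0Ngt d_gt0 ltxx.
Qed.

Section Vectors.
Variables (R : realType) (n : nat).
Implicit Types (y : {ffun 'I_n -> R}) (t : R).

Definition mass y : R := \sum_(l < n) y l.
Definition scalev t y : {ffun 'I_n -> R} := [ffun l => t * y l].
Definition normalize y := scalev (mass y)^-1 y.

Lemma mass_scalev t y : mass (scalev t y) = t * mass y.
Proof. by rewrite /mass mulr_sumr; apply: eq_bigr => l _; rewrite ffunE. Qed.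

Lemma scalev_ge0 t y : 0 <= t -> (forall i, 0 <= y i) -> forall i, 0 <= scalev t y i.
Proof. by move=> t_ge0 y_ge0 i; rewrite ffunE mulr_ge0. Qed.

Lemma mass_normalize y : mass y != 0 -> mass (normalize y) = 1.
Proof. by move=> y_neq0; rewrite mass_scalev mulVf. Qed.

Lemma normalizeK y : mass y != 0 -> scalev (mass y) (normalize y) = y.
Proof. by move=> y_neq0; apply/ffunP => l; rewrite !ffunE mulrA mulfV ?mul1r. Qed.

Lemma normalize_scalev t y : t != 0 -> mass y = 1 -> normalize (scalev t y) = y.
Proof.
move=> t_neq0 y1; apply/ffunP => l.
by rewrite !ffunE mass_scalev y1 mulr1 mulrA mulVf ?mul1r.
Qed.

End Vectors.

Section Tensors.
Variables (R : realType) (k n : nat).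
Implicit Types (P : tensor R k n) (y : {ffun 'I_n -> R}).

Definition tmass P y : R := \sum_(i < n) tapply P y i.

Lemma sum_prod_midx y :
  \sum_(j : midx k n) \prod_(m < k.-1) y (j m) = mass y ^+ k.-1.
Proof.
rewrite -(bigA_distr_bigA (fun (m : 'I_k.-1) (l : 'I_n) => y l)).
by rewrite prodr_const card_ord.
Qed.

Lemma tmassE P y :
  tmass P y = \sum_(j : midx k n) (\sum_(l < n) P l j) * \prod_(m < k.-1) y (j m).
Proof. by rewrite /tmass exchange_big; apply: eq_bigr => j _; rewrite mulr_suml. Qed.

Lemma tapply_scalev P t y i : tapply P (scalev t y) i = t ^+ k.-1 * tapply P y i.
Proof.
rewrite /tapply mulr_sumr; apply: eq_bigr => j _.
under eq_bigr do rewrite ffunE.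
by rewrite big_split /= prodr_const card_ord mulrCA.
Qed.

Lemma tmass_scalev P t y : tmass P (scalev t y) = t ^+ k.-1 * tmass P y.
Proof. by rewrite /tmass mulr_sumr; apply: eq_bigr => i _; rewrite tapply_scalev. Qed.

Lemma tapply_PR_tensor P v y i :
  tapply (PR_tensor P v) y i = tapply P y i + v i * (mass y ^+ k.-1 - tmass P y).
Proof.
rewrite /tapply /PR_tensor -sum_prod_midx tmassE.
under eq_bigr do rewrite mulrDl.
rewrite big_split /= -sumrB mulr_sumr; congr (_ + _); apply: eq_bigr => j _.
by rewrite -mulrA mulrBl mul1r.
Qed.

Lemma tmass_ge0 P y : col_substochastic P -> (forall i, 0 <= y i) -> 0 <= tmass P y.
Proof.
move=> [P_ge0 _] y_ge0; rewrite tmassE; apply: sumr_ge0 => j _.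
by rewrite mulr_ge0 ?sumr_ge0 ?prodr_ge0.
Qed.

Lemma tmass_le P y : col_substochastic P -> (forall i, 0 <= y i) ->
  tmass P y <= mass y ^+ k.-1.
Proof.
move=> [_ P_sub] y_ge0; rewrite tmassE -sum_prod_midx; apply: ler_sum => j _.
by rewrite ler_piMl ?prodr_ge0.
Qed.

End Tensors.

Section PageRank.
Variables (R : realType) (k n : nat) (Pb : tensor R k n) (v : {ffun 'I_n -> R}) (alpha : R).
Hypotheses (hk : (2 <= k)%N) (hPb : col_substochastic Pb) (hv : stochastic v).
Hypotheses (alpha_ge0 : 0 <= alpha) (alpha_lt1 : alpha < 1).

Local Notation MPR := (MPR_solution alpha (PR_tensor Pb v) v).
Local Notation MLPPR := (MLPPR_solution alpha Pb v).

Let k1_gt0 : (0 < k.-1)%N. Proof. by case: k hk => [|[|]]. Qed.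

Let expr_km2S (s : R) : s ^+ (k - 2) * s = s ^+ k.-1.
Proof. by case: k hk => [|[|k']] // _; rewrite -exprSr subn2. Qed.

Lemma MPR_equationE x i : mass x = 1 ->
  (x i = alpha * tapply (PR_tensor Pb v) x i + (1 - alpha) * v i) <->
  (x i = alpha * tapply Pb x i + (1 - alpha * tmass Pb x) * v i).
Proof.
move=> x1; rewrite tapply_PR_tensor x1 expr1n.
suff -> : alpha * (tapply Pb x i + v i * (1 - tmass Pb x)) + (1 - alpha) * v i =
  alpha * tapply Pb x i + (1 - alpha * tmass Pb x) * v i by [].
by ring.
Qed.

Lemma MLPPR_mass_eq y : MLPPR y -> mass y ^+ k.-1 - alpha * tmass Pb y = 1.
Proof.
move=> [y_eq _]; case: hv => _ <-.
by rewrite -(eq_bigr _ (fun i _ => y_eq i)) sumrB -!mulr_sumr expr_km2S.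
Qed.

Lemma MLPPR_mass_gt0 y : MLPPR y -> 0 < mass y.
Proof.
move=> y_sol; have [_ y_ge0] := y_sol; rewrite lt_def sumr_ge0 // andbT.
apply: contra_eq_neq (MLPPR_mass_eq y_sol) => ->.
rewrite expr0n eqn0Ngt k1_gt0 sub0r.
apply: contraTneq (mulr_ge0 alpha_ge0 (tmass_ge0 hPb y_ge0)) => /(canRL opprK) ->.
by rewrite ler0N1.
Qed.

Lemma MLPPR_normalize y : MLPPR y -> MPR (normalize y).
Proof.
move=> y_sol; have [y_eq y_ge0] := y_sol; have s_gt0 := MLPPR_mass_gt0 y_sol.
have s_neq0 := lt0r_neq0 s_gt0.
have x1 := mass_normalize s_neq0.
have x_ge0 : forall i, 0 <= normalize y i.
  by apply: scalev_ge0; rewrite // invr_ge0 ltW.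
split; last by split.
move=> i; apply/MPR_equationE => //.
rewrite tapply_scalev tmass_scalev [alpha * (_ * tmass _ _)]mulrCA !ffunE.
have -> : alpha * tmass Pb y = mass y ^+ (k - 2) * mass y - 1.
  by rewrite expr_km2S -(MLPPR_mass_eq y_sol); ring.
rewrite -(y_eq i) exprVn -expr_km2S.
have e_neq0 : mass y ^+ (k - 2) != 0 by rewrite expf_neq0.
by field; rewrite e_neq0 s_neq0.
Qed.

Lemma MPR_scalev c x : MPR x -> 0 < c -> c ^+ k.-1 * (1 - alpha * tmass Pb x) = 1 ->
  MLPPR (scalev c x).
Proof.
move=> [x_eq [x_ge0]]; rewrite -/(mass x) => x1 c_gt0 c_root.
split; last by apply: scalev_ge0 => //; rewrite ltW.
move=> i; have /(MPR_equationE i x1) xi := x_eq i.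
rewrite -/(mass (scalev c x)) mass_scalev x1 mulr1 ffunE mulrA expr_km2S tapply_scalev.
by rewrite [alpha * _]mulrCA -mulrBr xi addrC addKr mulrA c_root mul1r.
Qed.

Lemma MPR_lift x : MPR x -> exists2 y, MLPPR y & normalize y = x.
Proof.
move=> x_sol; have [_ [x_ge0]] := x_sol; rewrite -/(mass x) => x1.
have gap_gt0 : 0 < (1 - alpha * tmass Pb x)^-1.
  rewrite invr_gt0 subr_gt0 (le_lt_trans _ alpha_lt1) // ler_piMr //.
  by have := tmass_le hPb x_ge0; rewrite x1 expr1n.
have [c c_gt0 c_root] := exists_pos_root k1_gt0 gap_gt0.
exists (scalev c x); last by rewrite normalize_scalev ?gt_eqF.
by apply: MPR_scalev; rewrite // c_root mulVf // -invr_eq0 gt_eqF.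
Qed.

Lemma MLPPR_mass_normalize y : MLPPR y ->
  mass y ^+ k.-1 * (1 - alpha * tmass Pb (normalize y)) = 1.
Proof.
move=> y_sol; have := MLPPR_mass_eq y_sol.
rewrite -{2}(normalizeK (lt0r_neq0 (MLPPR_mass_gt0 y_sol))) tmass_scalev => y_mass.
by rewrite mulrBr mulr1 mulrCA.
Qed.

Lemma MLPPR_normalize_inj y1 y2 : MLPPR y1 -> MLPPR y2 ->
  normalize y1 = normalize y2 -> y1 = y2.
Proof.
move=> y1_sol y2_sol same_x.
have s1_gt0 := MLPPR_mass_gt0 y1_sol; have s2_gt0 := MLPPR_mass_gt0 y2_sol.
have e2 := MLPPR_mass_normalize y2_sol.
have gap_neq0 : 1 - alpha * tmass Pb (normalize y2) != 0.
  by apply: contra_eq_neq e2 => ->; rewrite mulr0 eq_sym oner_neq0.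
have same_pow : mass y1 ^+ k.-1 = mass y2 ^+ k.-1.
  by apply: (mulIf gap_neq0); rewrite e2 -same_x MLPPR_mass_normalize.
have same_mass : mass y1 = mass y2.
  by apply/eqP; rewrite -(eqrXn2 k1_gt0) ?ltW // same_pow.
by rewrite -(normalizeK (lt0r_neq0 s1_gt0)) -(normalizeK (lt0r_neq0 s2_gt0)) same_x same_mass.
Qed.

End PageRank.

Theorem theorem3p15 (R : realType) (k n : nat) (hk : (2 <= k)%N) (hn : (1 <= n)%N)
  (Pb : tensor R k n) (v : {ffun 'I_n -> R}) (alpha : R)
  (hPb : col_substochastic Pb) (hv : stochastic v)
  (ha0 : 0 <= alpha) (ha1 : alpha < 1) :
  (exists! x : {ffun 'I_n -> R}, MPR_solution alpha (PR_tensor Pb v) v x) <->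
  (exists! y : {ffun 'I_n -> R}, MLPPR_solution alpha Pb v y).
Proof.
apply: (unique_ex_transfer (g := @normalize R n)).
- exact: MLPPR_normalize.
- exact: MPR_lift.
- exact: MLPPR_normalize_inj.
Qed.
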